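(* For all integers $n \geq 3$ and $k \geq 4$, $h(n,k) \geq n$.
   Context: All graphs are finite and simple. A degree monotone path in a graph $G$ is a path $v_1v_2\ldots v_m$ such that $\deg(v_1)\le \cdots\le \deg(v_m)$ or $\deg(v_1)\ge \cdots\ge \deg(v_m)$; its length is its number of vertices. $mp(G)$ denotes the maximum length of a degree monotone path in $G$. For a pair $e$ of non-adjacent vertices, $G+e$ is $G$ with the edge $e$ added. A graph $G$ is $k$-saturated if $mp(G)\le k-1$ and $mp(G+e)\ge k$ for every pair $e$ of non-adjacent vertices of $G$ (so $K_m$ is $k$-saturated for $m\le k-1$). $h(n,k)$ is the minimum number of edges of a $k$-saturated graph on $n$ vertices. *)

(* A simple graph on n vertices = symmetric irreflexive
   boolean relation on 'I_n. *)
From mathcomp Require Import all_boot.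
Set Implicit Arguments. Unset Strict Implicit. Unset Printing Implicit Defensive.

Section Graphs.
Variable T : finType.

Definition simple_graph (g : rel T) : Prop := symmetric g /\ irreflexive g.

Definition deg (g : rel T) (x : T) : nat := #|[set y | g x y]|.

Definition nedges (g : rel T) : nat :=
  #|[set p : {set T} | [exists x, exists y, (x != y) && g x y && (p == [set x; y])]]|.

Definition add_edge (g : rel T) (u v : T) : rel T :=
  fun x y => [|| g x y, (x == u) && (y == v) | (x == v) && (y == u)].

(* a path: nonempty sequence of pairwise distinct vertices, consecutive
   ones adjacent; its length is its number of vertices (size p) *)
Definition is_gpath (g : rel T) (p : seq T) : bool :=
  match p with
  | [::] => false
  | x :: s => uniq (x :: s) && path g x s
  end.

Definition deg_monotone_path (g : rel T) (p : seq T) : bool :=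
  is_gpath g p &&
  (sorted (fun a b => deg g a <= deg g b) p ||
   sorted (fun a b => deg g b <= deg g a) p).

Definition k_saturated (g : rel T) (k : nat) : Prop :=
  (forall p, deg_monotone_path g p -> size p <= k.-1) /\
  (forall u v, u != v -> ~~ g u v ->
     exists p, deg_monotone_path (add_edge g u v) p /\ k <= size p).

End Graphs.

(* Let G be k-saturated. If u has degree at most 1 and z is a local maximum
   of the degree with deg z > deg u, then a long monotone path of G + uz can
   use the new edge only as its last step, so G contains a path of at least
   k - 1 vertices ending at u whose degrees are at most deg u + 1. This rules
   out isolated vertices, and also leaves that are not adjacent to a vertex z
   of maximum degree: such a leaf would carry a chain of degree-2 vertices of
   length k - 1, which either extends to a monotone path of length k or is a
   whole path component, and a k-saturated graph has no path component on
   three or more vertices. A similar argument gives z a neighbour that is not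
   a leaf. Then at most deg z - 1 vertices are leaves and all others have
   degree at least 2, so 2|E| >= deg z + 2(n - 1) - (deg z - 1) = 2n - 1. *)

From mathcomp Require Import all_boot zify.
Set Implicit Arguments. Unset Strict Implicit. Unset Printing Implicit Defensive.

Section Degree.
Variable T : finType.
Implicit Types (g : rel T) (u v w x y : T).

Definition deg_le g : rel T := fun x y => deg g x <= deg g y.
Definition deg_ge g : rel T := fun x y => deg g y <= deg g x.
Definition deg_local_max g z := forall y, g z y -> deg g y <= deg g z.

Lemma deg_le_refl g : reflexive (deg_le g).
Proof. by move=> x; apply: leqnn. Qed.

Lemma deg_le_trans g : transitive (deg_le g).
Proof. by move=> y x z; apply: leq_trans. Qed.

Lemma deg_gt0 g x y : g x y -> 0 < deg g x.
Proof. by move=> gxy; apply/card_gt0P; exists y; rewrite inE. Qed.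

Lemma deg0_nadj g x y : deg g x = 0 -> ~~ g x y.
Proof. by move=> d0; apply/negP=> /deg_gt0; rewrite d0. Qed.

Lemma deg1_nbr g x w y : deg g x = 1 -> g x w -> g x y -> y = w.
Proof.
move=> /eqP/cards1P[z nbrs] gxw gxy.
have: w \in [set y | g x y] by rewrite inE.
have: y \in [set y | g x y] by rewrite inE.
by rewrite nbrs !inE => /eqP-> /eqP->.
Qed.

Lemma deg_ge2 g x a b : g x a -> g x b -> a != b -> 1 < deg g x.
Proof.
move=> gxa gxb ab; have sub : [set a; b] \subset [set y | g x y].
  by apply/subsetP=> y; rewrite !inE => /orP[]/eqP->.
by move: (subset_leq_card sub); rewrite cards2 ab.
Qed.

Lemma deg2_nbr g x a b y : deg g x = 2 -> g x a -> g x b -> a != b -> g x y ->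
  y = a \/ y = b.
Proof.
move=> d2 gxa gxb ab gxy; have sub : [set a; b] \subset [set y | g x y].
  by apply/subsetP=> z; rewrite !inE => /orP[]/eqP->.
have: [set a; b] == [set y | g x y] by rewrite eqEcard sub cards2 ab -/(deg g x) d2.
move/eqP=> nbrs; have: y \in [set y | g x y] by rewrite inE.
by rewrite -nbrs !inE => /orP[]/eqP->; [left | right].
Qed.

Lemma deg_gt1_nbr g x a : 1 < deg g x -> exists2 y, g x y & y != a.
Proof.
move=> d2; have: 0 < #|[set y | g x y] :\ a|.
  by move: (cardsD1 a [set y | g x y]) d2; rewrite /deg; case: (a \in _) => /=; lia.
by case/card_gt0P=> y; rewrite !inE => /andP[ya gxy]; exists y.
Qed.

Lemma deg_le1_nadj_pair g : 2 < #|T| -> (forall x, deg g x <= 1) ->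
  exists u v, u != v /\ ~~ g u v.
Proof.
move=> cardT d1; have /card_gt0P[a _] : 0 < #|T| by lia.
have /card_gt1P[b [c [/[!inE] ba ca bc]]] : 1 < #|[set~ a]| by rewrite cardsC1; lia.
case: (boolP (g a b)) => gab; last by exists a, b; rewrite eq_sym.
exists a, c; split; first by rewrite eq_sym.
by apply/negP=> gac; move: (d1 a) (deg_ge2 gab gac bc); lia.
Qed.

Lemma deg_full g z : irreflexive g -> (forall x, x != z -> g z x) -> deg g z = #|T|.-1.
Proof.
move=> girr full; rewrite -(cardsC1 z); apply: eq_card => x; rewrite !inE.
by case: (eqVneq x z) => [-> | /full]; [rewrite girr | ].
Qed.

Lemma add_edge_sym g u v : symmetric g -> symmetric (add_edge g u v).
Proof.
move=> gsym x y; rewrite /add_edge gsym.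
by case: (g y x); case: (x == u); case: (x == v); case: (y == u); case: (y == v).
Qed.

Lemma add_edge_id_l g u v x y : x != u -> x != v -> add_edge g u v x y = g x y.
Proof. by move=> xu xv; rewrite /add_edge (negbTE xu) (negbTE xv) !orbF. Qed.

Lemma add_edge_id_r g u v x y : y != u -> y != v -> add_edge g u v x y = g x y.
Proof. by move=> yu yv; rewrite /add_edge (negbTE yu) (negbTE yv) !andbF !orbF. Qed.

Lemma add_edge_id_v g u v x y : x != v -> y != v -> add_edge g u v x y = g x y.
Proof. by move=> xv yv; rewrite /add_edge (negbTE xv) (negbTE yv) andbF orbF. Qed.

Lemma deg_add_edge g u v x : x != u -> x != v -> deg (add_edge g u v) x = deg g x.
Proof. by move=> xu xv; apply: eq_card => y; rewrite !inE add_edge_id_l. Qed.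

Lemma deg_add_edge_l g u v : u != v -> ~~ g u v ->
  deg (add_edge g u v) u = (deg g u).+1.
Proof.
rewrite /deg => uv nguv; have -> : [set y | add_edge g u v u y] = v |: [set y | g u y].
  by apply/setP=> y; rewrite !inE /add_edge eqxx (negbTE uv) orbF orbC.
by rewrite cardsU1 inE (negbTE nguv).
Qed.

Lemma deg_add_edge_r g u v : symmetric g -> u != v -> ~~ g u v ->
  deg (add_edge g u v) v = (deg g v).+1.
Proof.
rewrite /deg => gsym uv nguv; have -> : [set y | add_edge g u v v y] = u |: [set y | g v y].
  by apply/setP=> y; rewrite !inE /add_edge eqxx eq_sym (negbTE uv) orbC.
by rewrite cardsU1 inE gsym (negbTE nguv).
Qed.

End Degree.

Section IndexedPath.
Variable T : finType.
Implicit Types (r e : rel T) (f c : nat -> T).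

(* A path on s vertices is encoded by its values f 0, ..., f s.-1; the values
   of f beyond s are irrelevant. *)
Definition ilinked e f s := forall i, i.+1 < s -> e (f i) (f i.+1).
Definition ipath r f s := {in gtn s &, injective f} /\ ilinked r f s.
Definition leaf_chain g c L :=
  [/\ ipath g c L, deg g (c L.-1) = 1 & forall i, 0 < i -> i.+1 < L -> deg g (c i) = 2].

Lemma mem_mkseq f s i : i < s -> f i \in mkseq f s.
Proof. by move=> il; apply: map_f; rewrite mem_iota. Qed.

Lemma mkseqP f s x : reflect (exists2 i, i < s & x = f i) (x \in mkseq f s).
Proof.
apply: (iffP mapP) => [[i] | [i il ->]]; last by exists i; rewrite ?mem_iota.
by rewrite mem_iota => /andP[_ il] ->; exists i.
Qed.

Lemma ilinked_sorted e f s : ilinked e f s <-> sorted e (mkseq f s).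
Proof.
case: s => [|s]; first by [].
split=> [fe | /(sortedP (f 0)) fe i]; first apply/(sortedP (f 0)) => i.
  by rewrite size_mkseq => lt; rewrite !nth_mkseq //; [apply: fe | lia].
by move=> lt; have := fe i; rewrite size_mkseq !nth_mkseq //; [apply | lia].
Qed.

Lemma ilinked_le e f s i j : reflexive e -> transitive e -> ilinked e f s ->
  i <= j -> j < s -> e (f i) (f j).
Proof.
move=> erefl etrans fe ij js; elim: j ij js => [|j IH] ij js.
  by move: ij; rewrite leqn0 => /eqP->.
case: (ltngtP i j.+1) ij => // [ij _ | -> _ //].
by apply: etrans (IH _ _) (fe _ js) => //; lia.
Qed.

Lemma ipath_prefix r f s t : ipath r f s -> t <= s -> ipath r f t.
Proof.
move=> [finj fr] ts; split=> [i j it jt | i it]; last by apply: fr; lia.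
by apply: finj; [apply: leq_trans it ts | apply: leq_trans jt ts].
Qed.

Lemma ipath_le_card r f s : ipath r f s -> s <= #|T|.
Proof.
by move=> [/mkseq_uniqP/card_uniqP]; rewrite size_mkseq => <- _; apply: max_card.
Qed.

Lemma ipath_cons r f s x : ipath r f s -> 0 < s -> r x (f 0) ->
  (forall i, i < s -> x != f i) ->
  ipath r (fun i => if i is i'.+1 then f i' else x) s.+1.
Proof.
move=> [finj fr] s0 rx xf; split=> [[|i] [|j] /= ilt jlt | [|i] /= ilt] //.
- by move/eqP; rewrite (negbTE (xf _ jlt)).
- by move/eqP; rewrite eq_sym (negbTE (xf _ ilt)).
- by move/(finj i j ilt jlt)->.
- exact: fr.
Qed.

Lemma ipath_inner_deg r f s i : symmetric r -> ipath r f s -> 0 < i -> i.+1 < s ->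
  1 < deg r (f i).
Proof.
move=> rsym [finj fr] i0 il; apply: (@deg_ge2 _ r _ (f i.-1) (f i.+1)).
- by rewrite rsym; have := fr i.-1; rewrite prednK //; apply; lia.
- exact: fr.
- by apply/eqP=> /finj; rewrite !inE /=; lia.
Qed.

Lemma ipath_closed r f s (P : pred T) i0 : symmetric r -> ipath r f s ->
  (forall x y, P x -> r x y -> P y) -> i0 < s -> P (f i0) ->
  forall i, i < s -> P (f i).
Proof.
move=> rsym [_ fr] Pr i0s Pi0.
have up d : i0 + d < s -> P (f (i0 + d)).
  elim: d => [|d IH] lt; first by rewrite addn0.
  by apply: (Pr (f (i0 + d))); [apply: IH; lia | rewrite addnS; apply: fr; lia].
have down d : d <= i0 -> P (f (i0 - d)).
  elim: d => [|d IH] le; first by rewrite subn0.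
  apply: (Pr (f (i0 - d))); first by apply: IH; lia.
  have -> : i0 - d = (i0 - d.+1).+1 by lia.
  by rewrite rsym; apply: fr; lia.
move=> i il; case: (leqP i0 i) => le.
  by have := up (i - i0); rewrite subnKC //; apply.
by have := down (i0 - i); rewrite subKn ?(ltnW le) //; apply; lia.
Qed.

Lemma deg_monotone_path_mkseq g f s : ipath g f s -> 0 < s ->
  ilinked (deg_le g) f s \/ ilinked (deg_ge g) f s -> deg_monotone_path g (mkseq f s).
Proof.
move=> [/mkseq_uniqP fu /ilinked_sorted fg] s0 mono.
rewrite /deg_monotone_path; case: s s0 fu fg mono => // s _ fu fg mono.
apply/andP; split; first by move: fu fg; rewrite /mkseq /= => -> ->.
by apply/orP; case: mono => /ilinked_sorted; [left | right].
Qed.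

Lemma deg_monotone_path_rev g (p : seq T) : symmetric g ->
  deg_monotone_path g (rev p) = deg_monotone_path g p.
Proof.
move=> gsym; have gpath q : is_gpath g q = [&& q != [::], uniq q & sorted g q] by case: q.
rewrite /deg_monotone_path !gpath rev_uniq rev_sorted (eq_sorted (e' := g)) //.
by rewrite !rev_sorted -size_eq0 size_rev size_eq0 orbC.
Qed.

Lemma deg_monotone_pathP g (p : seq T) : symmetric g -> deg_monotone_path g p ->
  exists f, ipath g f (size p) /\ ilinked (deg_le g) f (size p).
Proof.
move=> gsym; wlog up : p / sorted (deg_le g) p => [wlog dp | ].
  case/andP: (dp) => _ /orP[up | down]; first exact: wlog up dp.
  rewrite -(size_rev p); apply: wlog; last by rewrite deg_monotone_path_rev.
  by rewrite rev_sorted.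
case: p up => // x0 p' up /andP[/andP[pu pg] _].
exists (nth x0 (x0 :: p')); split; last exact/(sortedP x0).
by split; [apply/(uniqP x0) | apply/(sortedP x0)].
Qed.

Lemma leaf_chain_nbr g c L i y : symmetric g -> leaf_chain g c L -> 0 < i < L ->
  g (c i) y -> y = c i.-1 \/ i.+1 < L /\ y = c i.+1.
Proof.
move=> gsym [[cinj cg] last inner] /andP[i0 iL] gy.
have gprev : g (c i) (c i.-1) by rewrite gsym; have := cg i.-1; rewrite prednK //; apply.
case: (ltnP i.+1 L) => iL'; last first.
  by left; apply: (deg1_nbr _ gprev gy); have -> : i = L.-1 by lia.
have ne : c i.-1 != c i.+1.
  by apply/eqP=> /cinj; rewrite !inE => /(_ (leq_ltn_trans (leq_pred i) iL) iL'); lia.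
by have [-> | ->] := deg2_nbr (inner _ i0 iL') gprev (cg _ iL') ne gy; [left | right].
Qed.

Lemma leaf_chain_deg_ge g c L : leaf_chain g c L -> 1 < deg g (c 0) ->
  ilinked (deg_ge g) c L.
Proof.
move=> [_ last inner] d0 i il; rewrite /deg_ge.
have hi : 1 < deg g (c i) by case: i il => // i il; rewrite inner.
suff : deg g (c i.+1) <= 2 by lia.
case: (ltnP i.+2 L) => iL; first by rewrite inner.
have -> : i.+1 = L.-1 by lia.
by rewrite last.
Qed.

Lemma leaf_chain_cons g c L : symmetric g -> irreflexive g -> leaf_chain g c L ->
  1 < L -> deg g (c 0) = 2 -> exists c', leaf_chain g c' L.+1.
Proof.
move=> gsym girr cC L1 d0; have [cP last inner] := cC.
have [y gy yc1] : exists2 y, g (c 0) y & y != c 1 by apply: deg_gt1_nbr; rewrite d0.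
have fresh i : i < L -> y != c i.
  move=> iL; apply/eqP=> yci; case: i iL yci => [|[|i]] iL yci.
  - by move: gy; rewrite yci girr.
  - by move: yc1; rewrite yci eqxx.
  have gc0 : g (c i.+2) (c 0) by rewrite -yci gsym.
  have [L0 i1L] : 0 < L /\ i.+1 < L by lia.
  have [c0 | [i3L c0]] := leaf_chain_nbr gsym cC (iL : 0 < i.+2 < L) gc0.
    by move: (cP.1 0 i.+1 L0 i1L c0).
  by move: (cP.1 0 i.+3 L0 i3L c0).
exists (fun i => if i is i'.+1 then c i' else y); split.
- by apply: ipath_cons; rewrite // 1?gsym //; lia.
- by case: L L1 last {inner cP cC fresh}.
- by case=> [//|[_ _ | i _ iL]]; [rewrite d0 | apply: inner].
Qed.

Lemma ipath_head r f s : symmetric r -> ipath r f s -> ilinked (deg_le r) f s -> 3 < s ->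
  uniq [:: f 0; f 1; f 2; f 3] /\ forall i, 0 < i < 4 -> 1 < deg r (f i).
Proof.
move=> rsym fP fM s4; split; first by apply/(mkseq_uniqP f 4); case: (ipath_prefix fP s4).
move=> i /andP[i0 i4]; case: (ltnP i 3) => i3; first by apply: (ipath_inner_deg rsym fP); lia.
have -> : i = 3 by lia.
by apply: leq_trans (fM 2 s4); apply: (ipath_inner_deg rsym fP); lia.
Qed.

End IndexedPath.

Section Saturated.
Variables (T : finType) (g : rel T) (k : nat).
Hypothesis gsym : symmetric g.
Hypothesis girr : irreflexive g.
Hypothesis mp_lt : forall p, deg_monotone_path g p -> size p <= k.-1.
Hypothesis saturated : forall u v, u != v -> ~~ g u v ->
  exists p, deg_monotone_path (add_edge g u v) p /\ k <= size p.
Hypothesis k_ge4 : 4 <= k.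

Lemma monotone_ipath_short f s : ipath g f s ->
  ilinked (deg_le g) f s \/ ilinked (deg_ge g) f s -> s <= k.-1.
Proof.
case: s => // s fP mono; rewrite -[s.+1](size_mkseq f); apply: mp_lt.
exact: deg_monotone_path_mkseq.
Qed.

Lemma add_edge_long_path u v : u != v -> ~~ g u v ->
  exists f s, [/\ ipath (add_edge g u v) f s, ilinked (deg_le (add_edge g u v)) f s & k <= s].
Proof.
move=> uv nguv; have [p [dp kp]] := saturated uv nguv.
have [f [fP fM]] := deg_monotone_pathP (add_edge_sym u v gsym) dp.
by exists f, (size p).
Qed.

Lemma add_edge_path_meets u v f s : ipath (add_edge g u v) f s ->
  ilinked (deg_le (add_edge g u v)) f s -> k <= s ->
  exists2 i, i < s & (f i == u) || (f i == v).
Proof.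
move=> [finj fr] fM ks.
case: (boolP [exists i : 'I_s, (f i == u) || (f i == v)]).
  by case/existsP=> -[i il] hit; exists i.
move/existsPn=> avoid.
have off i : i < s -> f i != u /\ f i != v.
  by move=> il; apply/andP; rewrite -negb_or (avoid (Ordinal il)).
suff : s <= k.-1 by lia.
apply: (@monotone_ipath_short f); first split=> // i il.
  by have [? ?] := off i (ltnW il); move: (fr i il); rewrite add_edge_id_l.
left=> i il.
have [? ?] := off i (ltnW il); have [? ?] := off i.+1 il.
by move: (@fM i il); rewrite /deg_le !deg_add_edge.
Qed.

(* In G + uz a vertex following z on a monotone path would need degree at
   least deg z + 1, more than any neighbour of z has; so the new edge can only
   be the last step of the path, and the part up to u is a path of G. *)
Section LowVertex.
Variables (u z : T).
Hypotheses (uz : u != z) (nguz : ~~ g u z) (zmax : deg_local_max g z).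
Hypotheses (deg_uz : deg g u < deg g z) (deg_u : deg g u <= 1).
Local Notation g' := (add_edge g u z).

Section AddedEdgePath.
Variables (f : nat -> T) (s : nat).
Hypotheses (fP : ipath g' f s) (fM : ilinked (deg_le g') f s) (ks : k <= s).

Let finj i j : i < s -> j < s -> f i = f j -> i = j.
Proof. exact: fP.1. Qed.

Lemma low_path_z_last i : i.+1 < s -> f i != z.
Proof.
move=> il; apply/eqP=> fiz; have gz := fP.2 i il; have mz := @fM i il.
rewrite fiz in gz mz; rewrite /deg_le deg_add_edge_r // in mz.
have fjz : f i.+1 != z.
  by apply/eqP=> fjz; move: (finj (ltnW il) il); rewrite fiz fjz => /(_ erefl); lia.
case: (eqVneq (f i.+1) u) => [fju | fju].
  by move: mz; rewrite fju deg_add_edge_l //; lia.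
have gzj : g z (f i.+1) by rewrite -(add_edge_id_r _ _ fju fjz).
by move: (zmax gzj) mz; rewrite deg_add_edge //; lia.
Qed.

Lemma low_path_step i : i.+1 < s -> f i != u -> f i.+1 != u ->
  g (f i) (f i.+1) /\ deg_le g (f i) (f i.+1).
Proof.
move=> il fiu fju; have fiz := low_path_z_last il.
have gij : g (f i) (f i.+1) by move: (fP.2 i il); rewrite add_edge_id_l.
split=> //; case: (eqVneq (f i.+1) z) => [fjz | fjz].
  by rewrite /deg_le fjz; apply: zmax; rewrite gsym -fjz.
by move: (@fM i il); rewrite /deg_le !deg_add_edge.
Qed.

Lemma low_path_not_in_g :
  ~ (forall i, i.+1 < s -> g (f i) (f i.+1) /\ deg_le g (f i) (f i.+1)).
Proof.
move=> gsteps; suff : s <= k.-1 by lia.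
apply: (@monotone_ipath_short f); first split=> [|i il]; first exact: fP.1.
  by case: (gsteps i il).
by left=> i il; case: (gsteps i il).
Qed.

Lemma low_path_hits_u : exists2 j, j < s & f j = u.
Proof.
case: (boolP [exists j : 'I_s, f j == u]); first by case/existsP=> -[j js] /eqP; exists j.
move/existsPn=> avoid; exfalso; apply: low_path_not_in_g => i il.
by apply: low_path_step => //; [exact: (avoid (Ordinal (ltnW il))) | exact: (avoid (Ordinal il))].
Qed.

Lemma low_path_u_inner j : j < s -> f j = u -> 0 < j /\ s <= j.+2.
Proof.
move=> js fju; have other i : i < s -> i != j -> f i != u.
  by move=> il; apply: contra => /eqP fiu; apply/eqP; apply: finj; rewrite ?fju.
have j0 : 0 < j.
  rewrite lt0n; apply/eqP=> j0; subst j; apply: low_path_not_in_g => -[|i] il.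
    have f1u : f 1 != u by apply: other.
    have f1z : f 1 != z by apply: low_path_z_last; lia.
    move: (fP.2 0 il) (@fM 0 il); rewrite /deg_le fju add_edge_id_r //.
    by rewrite deg_add_edge_l // deg_add_edge // => gu1 le; split=> //; lia.
  by apply: low_path_step => //; apply: other => //; lia.
split=> //; rewrite leqNgt; apply/negP=> jl.
have fjz : f j.+1 != z by apply: low_path_z_last.
have gnext : g u (f j.+1).
  have fju' : f j.+1 != u by apply: other; lia.
  by move: (fP.2 j (ltnW jl)); rewrite fju add_edge_id_r.
have gprev : g u (f j.-1).
  have fiz : f j.-1 != z by apply: low_path_z_last; rewrite prednK.
  by move: (fP.2 j.-1); rewrite prednK // fju gsym => /(_ js); rewrite add_edge_id_v.
have d1 : deg g u = 1 by move: (deg_gt0 gnext); lia.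
by move: (finj (ltnW jl) (leq_ltn_trans (leq_pred j) js) (deg1_nbr d1 gprev gnext)); lia.
Qed.

Lemma low_path_prefix : exists2 L, k.-1 <= L &
  [/\ ipath g f L, f L.-1 = u & forall i, i < L -> deg g (f i) <= (deg g u).+1].
Proof.
have [j js fju] := low_path_hits_u; have [j0 sj] := low_path_u_inner js fju.
have off i : i < j -> f i != u /\ f i != z.
  move=> ij; split; last by apply: low_path_z_last; lia.
  by apply/eqP=> fiu; move: (finj (ltn_trans ij js) js); rewrite fiu fju => /(_ erefl); lia.
have off_z i : i <= j -> f i != z.
  by rewrite leq_eqVlt => /orP[/eqP-> | /off[]]; rewrite ?fju.
exists j.+1; first lia.
split=> //; first split.
- by move=> a b /[!inE] aj bj; apply: finj; lia.
- move=> i ij; have i1s : i.+1 < s by lia.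
  by move: (fP.2 i i1s); rewrite add_edge_id_v // off_z //; lia.
move=> i ij; case: (eqVneq i j) => [-> | ne]; first by rewrite fju.
have [fiu fiz] : f i != u /\ f i != z by apply: off; lia.
have le_ij : i <= j by lia.
have := ilinked_le (@deg_le_refl _ g') (@deg_le_trans _ g') fM le_ij js.
by rewrite /deg_le fju deg_add_edge_l // deg_add_edge //; lia.
Qed.

End AddedEdgePath.

Lemma low_vertex_path : exists h L, [/\ k.-1 <= L, ipath g h L, h L.-1 = u &
  forall i, i < L -> deg g (h i) <= (deg g u).+1].
Proof.
have [f [s [fP fM ks]]] := add_edge_long_path uz nguz.
by have [L kL [hP hL hdeg]] := low_path_prefix fP fM ks; exists f, L.
Qed.

End LowVertex.

(* A chain of L >= 3 vertices with leaves at both ends is a component of G.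
   Its part c 0, ..., c L.-2 is monotone, so L <= k; adding a chord at c 0
   keeps every long monotone path inside the component, so L >= k. For the
   chord c 0 -- c L.-2 such a path is then Hamiltonian, must start at the
   leaf c L.-1 and next visit the only vertex of degree 3. *)
Section PathComponent.
Variables (c : nat -> T) (L : nat).
Hypotheses (cC : leaf_chain g c L) (L3 : 2 < L) (deg_c0 : deg g (c 0) = 1).

Let cinj i j : i < L -> j < L -> c i = c j -> i = j.
Proof. by case: cC => -[cinj _] _ _; apply: cinj. Qed.

Let cg i : i.+1 < L -> g (c i) (c i.+1).
Proof. by case: cC => -[_ cg] _ _; apply: cg. Qed.

Let cne a b : a < L -> b < L -> a != b -> c a != c b.
Proof. by move=> aL bL; apply: contra => /eqP/cinj ->. Qed.

Lemma path_component_closed i y : i < L -> g (c i) y -> y \in mkseq c L.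
Proof.
move=> iL gy; case: i iL gy => [|i] iL gy.
  by rewrite (deg1_nbr deg_c0 (cg (ltnW L3)) gy); apply: mem_mkseq; lia.
by case: (leaf_chain_nbr gsym cC (iL : 0 < i.+1 < L) gy) => [|[?]] ->; apply: mem_mkseq; lia.
Qed.

Lemma path_component_le_k : L <= k.
Proof.
suff : L.-1 <= k.-1 by lia.
have [cP _ inner] := cC; apply: (@monotone_ipath_short c).
  exact: ipath_prefix (leq_pred L).
left=> i il; rewrite /deg_le (inner i.+1) //; last lia.
by case: i il => [|i] il; [rewrite deg_c0 | rewrite inner //; lia].
Qed.

Lemma path_component_nadj m : 1 < m < L -> c 0 != c m /\ ~~ g (c 0) (c m).
Proof.
case/andP=> m1 mL; split; first by apply/eqP=> /cinj; lia.
by apply/negP=> /(deg1_nbr deg_c0 (cg (ltnW L3))) /cinj; lia.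
Qed.

Lemma path_component_add_edge m : 1 < m < L ->
  exists f s, [/\ ipath (add_edge g (c 0) (c m)) f s,
    ilinked (deg_le (add_edge g (c 0) (c m))) f s, k <= s &
    {subset mkseq f s <= mkseq c L}].
Proof.
move=> mL; have [c0m ngm] := path_component_nadj mL.
have [f [s [fP fM ks]]] := add_edge_long_path c0m ngm.
exists f, s; split=> // x /mkseqP[i il ->].
have [i0 i0s hit] := add_edge_path_meets fP fM ks.
apply: (ipath_closed (add_edge_sym _ _ gsym) fP _ i0s) => //.
- move=> a b /mkseqP[j jL ->] /orP[gab | /orP[] /andP[_ /eqP->]].
  + exact: path_component_closed gab.
  + by apply: mem_mkseq; lia.
  + by apply: mem_mkseq; lia.
- by case/orP: hit => /eqP->; apply: mem_mkseq; lia.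
Qed.

Lemma path_component_ge_k : k <= L.
Proof.
have [f [s [[/mkseq_uniqP fu _] _ ks sub]]] := @path_component_add_edge 2 (L3 : 1 < 2 < L).
by move: (uniq_leq_size fu sub); rewrite !size_mkseq; lia.
Qed.

Lemma path_component_plus_deg j : 3 < L -> j < L ->
  deg (add_edge g (c 0) (c L.-2)) (c j) =
    if j == L.-1 then 1 else if j == L.-2 then 3 else 2.
Proof.
move=> L4 jL; have mL : 1 < L.-2 < L by lia.
have [c0m ngm] := path_component_nadj mL.
have [_ c_last inner] := cC.
case: (eqVneq j L.-1) => [-> | jl]; first by rewrite deg_add_edge ?cne //; lia.
case: (eqVneq j L.-2) => [-> | jm].
  by rewrite deg_add_edge_r // inner //; lia.
case: (posnP j) => [-> | j0]; first by rewrite deg_add_edge_l // deg_c0.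
by rewrite deg_add_edge ?inner ?cne //; lia.
Qed.

Lemma no_path_component : False.
Proof.
have Lk : L = k by apply/eqP; rewrite eqn_leq path_component_le_k path_component_ge_k.
have mL : 1 < L.-2 < L by lia.
have [f [s [fP fM ks sub]]] := path_component_add_edge mL.
have eq_fc : mkseq f s =i mkseq c L.
  apply: (uniq_min_size _ sub _).2; first by apply/mkseq_uniqP; case: fP.
  by rewrite !size_mkseq; lia.
have on_chain j : j < s -> exists2 j', j' < L & f j = c j'.
  by move=> js; apply/mkseqP/sub/mem_mkseq.
have finj i j : i < s -> j < s -> f i = f j -> i = j by move=> ? ?; apply: fP.1.
have [i iS fi] : exists2 i, i < s & c L.-1 = f i.
  by apply/mkseqP; rewrite eq_fc; apply: mem_mkseq; lia.
have i0 : i = 0.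
  case: i iS fi => // i iS fi; have [j jL fj] := on_chain i (ltnW iS).
  move: (@fM i iS); rewrite /deg_le -fi fj !path_component_plus_deg ?eqxx //; try lia.
  case: eqP => [ej | _]; last by case: eqP.
  by rewrite ej fi in fj; move: (finj _ _ (ltnW iS) iS fj); lia.
have [s1 s2] : 1 < s /\ 2 < s by lia.
have f1 : f 1 = c L.-2.
  have gl : g (c L.-1) (c L.-2).
    have e : L.-1 = L.-2.+1 by lia.
    by rewrite gsym e; apply: cg; rewrite -e; lia.
  have [_ c_last _] := cC; apply: (deg1_nbr c_last gl).
  by move: (fP.2 0 s1); rewrite i0 in fi; rewrite -fi add_edge_id_l ?cne //; lia.
have [j jL fj] := on_chain 2 s2.
move: (@fM 1 s2); rewrite /deg_le f1 fj !path_component_plus_deg //; try lia.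
rewrite ifN ?eqxx; last lia.
case: eqP => // _; case: eqP => // ej; rewrite ej -f1 in fj.
by move: (finj _ _ s2 s1 fj).
Qed.

End PathComponent.

Lemma leaf_chain_lt_k c L : leaf_chain g c L -> L < k.
Proof.
move=> cC; rewrite ltnNge; apply/negP=> kL; case: (cC) => cP _ _.
have : 0 < deg g (c 0) by apply: (deg_gt0 (cP.2 0 _)); lia.
case: (ltnP 1 (deg g (c 0))) => [d0 _ | d0 d0'].
  by move: (monotone_ipath_short cP (or_intror (leaf_chain_deg_ge cC d0))); lia.
by apply: (no_path_component cC); lia.
Qed.

Lemma leaf_chain_lt_k_pred c L : leaf_chain g c L -> deg g (c 0) <= 2 -> L < k.-1.
Proof.
move=> cC d2; rewrite ltnNge; apply/negP=> kL.
have Lk : L < k := leaf_chain_lt_k cC; case: (cC) => cP _ _.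
have : 0 < deg g (c 0) by apply: (deg_gt0 (cP.2 0 _)); lia.
case: (ltnP 1 (deg g (c 0))) => [d0 _ | d0 d0']; last first.
  by apply: (no_path_component cC); lia.
have [L1 d02] : 1 < L /\ deg g (c 0) = 2 by lia.
have [c' c'C] := leaf_chain_cons gsym girr cC L1 d02.
by move: (leaf_chain_lt_k c'C); lia.
Qed.

Lemma leaf_adj_local_max u z : deg g u = 1 -> deg_local_max g z -> 1 < deg g z ->
  g u z.
Proof.
move=> du zmax dz; apply/negPn/negP => nguz.
have uz : u != z by apply: contraTneq dz => <-; rewrite du.
have [duz du1] : deg g u < deg g z /\ deg g u <= 1 by lia.
have [h [L [kL hP hL hdeg]]] := low_vertex_path uz nguz zmax duz du1.
have hC : leaf_chain g h L.
  split=> // [|i i0 iL]; first by rewrite hL.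
  by have := ipath_inner_deg gsym hP i0 iL; have := hdeg i (ltnW iL); rewrite du; lia.
have h0 : deg g (h 0) <= 2 by have := hdeg 0; rewrite du; apply; lia.
by move: (leaf_chain_lt_k_pred hC h0); lia.
Qed.

Lemma no_isolated_vertex z u : deg_local_max g z -> 0 < deg g z -> 0 < deg g u.
Proof.
move=> zmax dz; rewrite lt0n; apply/eqP=> du.
have uz : u != z by apply: contraTneq dz => <-; rewrite du.
have [duz du1] : deg g u < deg g z /\ deg g u <= 1 by lia.
have [h [L [kL [_ hg] hL _]]] := low_vertex_path uz (deg0_nadj z du) zmax duz du1.
have e : L.-1 = L.-2.+1 by lia.
have gl : g (h L.-2) u by rewrite -hL e; apply: hg; rewrite -e; lia.
by move: (deg0_nadj (h L.-2) du); rewrite gsym gl.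
Qed.

Lemma saturated_deg_gt1 : 2 < #|T| -> exists x, 1 < deg g x.
Proof.
move=> cardT; case: (boolP [exists x, 1 < deg g x]) => [/existsP // | /existsPn d1].
have [u [v [uv nguv]]] : exists u v, u != v /\ ~~ g u v.
  by apply: deg_le1_nadj_pair => // x; rewrite leqNgt d1.
have [f [s [fP fM ks]]] := add_edge_long_path uv nguv.
have s4 : 3 < s by lia.
have [fu f_deg] := ipath_head (add_edge_sym _ _ gsym) fP fM s4.
have in_uv i : 0 < i < 4 -> (f i == u) || (f i == v).
  move=> i4; apply/negPn/negP; rewrite negb_or => /andP[fiu fiv].
  by move: (f_deg i i4) (d1 (f i)); rewrite deg_add_edge // ltnNge => /negbTE ->.
suff : size [:: f 1; f 2; f 3] <= size [:: u; v] by [].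
apply: uniq_leq_size; first by case/andP: fu.
by move=> x /[!inE] /or3P[] /eqP->; apply: in_uv.
Qed.

(* After joining two leaves u, u' of a star with center z, the vertices f 1,
   f 2, f 3 of a long monotone path are u, u', z in some order, so f 0 is a
   leaf, f 1 = z, and deg z > 2 = deg (f 2). *)
Lemma not_star z : 2 < #|T| -> ~ (forall x, x != z -> g z x /\ deg g x = 1).
Proof.
move=> cardT star.
have /card_gt1P[u [u' [/[!inE] uz u'z uu']]] : 1 < #|[set~ z]| by rewrite cardsC1; lia.
have [[gzu du] [gzu' du']] := (star u uz, star u' u'z).
have nguu : ~~ g u u'.
  by apply/negP=> /(deg1_nbr du (_ : g u z)) uz'; move: u'z; rewrite uz' ?eqxx // gsym.
have [f [s [fP fM ks]]] := add_edge_long_path uu' nguu.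
have s4 : 3 < s by lia.
have [fu f_deg] := ipath_head (add_edge_sym _ _ gsym) fP fM s4.
set g' := add_edge g u u' in fP fM f_deg.
have in_uuz i : 0 < i < 4 -> [|| f i == u, f i == u' | f i == z].
  move=> i4; apply/negPn/negP; rewrite !negb_or => /and3P[fiu fiu' fiz].
  by move: (f_deg i i4); rewrite deg_add_edge // (star _ fiz).2.
have eq123 : [:: f 1; f 2; f 3] =i [:: u; u'; z].
  apply: (uniq_min_size _ _ _).2 => //; first by case/andP: fu.
  by move=> x /[!inE] /or3P[] /eqP->; apply: in_uuz.
have [f0u f0u' f0z] : [/\ f 0 != u, f 0 != u' & f 0 != z].
  have : f 0 \notin [:: u; u'; z] by rewrite -eq123; case/andP: fu.
  by rewrite !inE !negb_or => /and3P.
have gf0z : g (f 0) z by rewrite gsym (star _ f0z).1.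
have gf01 : g (f 0) (f 1) by rewrite -(add_edge_id_l g (f 1) f0u f0u'); apply: fP.2; lia.
have f1z : f 1 = z := deg1_nbr (star _ f0z).2 gf0z gf01.
have f2uu : (f 2 == u) || (f 2 == u').
  have f2z : f 2 != z by rewrite -f1z; apply: contraTneq fu => ->; rewrite /= !inE eqxx /= !andbF.
  by move: (in_uuz 2 isT); rewrite (negbTE f2z) orbF.
have dz : deg g' z = #|T|.-1.
  rewrite /g' deg_add_edge 1?eq_sym //; apply: deg_full => // x xz.
  exact: (star x xz).1.
have d2 : deg g' (f 2) = 2.
  by case/orP: f2uu => /eqP->; rewrite /g' ?deg_add_edge_l ?deg_add_edge_r ?du ?du'.
move: (fM 1 (ltnW s4)) (ipath_le_card fP); rewrite /deg_le f1z dz d2 => le2 sT.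
by move: s4 sT le2; clear; lia.
Qed.

(* If all neighbours of z are leaves and G is not a star, a non-neighbour x
   of z of maximum degree is a local maximum to which those leaves would have
   to be adjacent. *)
Lemma max_deg_nonleaf_nbr z : 2 < #|T| -> (forall x, deg g x <= deg g z) -> 1 < deg g z ->
  exists2 y, g z y & deg g y != 1.
Proof.
move=> cardT zmax dz; have zloc : deg_local_max g z by move=> y _; apply: zmax.
case: (boolP [exists y, g z y && (deg g y != 1)]) => [/existsP[y /andP[]] | /existsPn leaves].
  by exists y.
exfalso.
have nbr_leaf y : g z y -> deg g y = 1.
  by move=> gzy; apply/eqP; move: (leaves y); rewrite gzy negbK.
pose far x := (x != z) && ~~ g z x.
case: (boolP [exists x, far x]) => [/existsP[x0 far0] | /existsPn near]; last first.
  apply: (@not_star z cardT) => x xz; have gzx : g z x by move: (near x); rewrite /far xz negbK.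
  by split=> //; apply: nbr_leaf.
have [x /andP[xz ngzx] xmax] := arg_maxnP (deg g) far0.
have xloc : deg_local_max g x.
  move=> y gxy; apply: xmax; apply/andP; split.
    by apply: contraNneq ngzx => yz; rewrite gsym -yz.
  apply/negP=> gzy; have [gyz gyx] : g y z /\ g y x by split; rewrite gsym.
  by move: xz; rewrite -(deg1_nbr (nbr_leaf _ gzy) gyz gyx) eqxx.
have dx : 1 < deg g x.
  have := no_isolated_vertex x zloc (ltnW dz); rewrite leq_eqVlt eq_sym.
  by case: eqP => // /leaf_adj_local_max /(_ zloc dz); rewrite gsym (negbTE ngzx).
have [u gzu _] := deg_gt1_nbr z dz.
have gux : g u x := leaf_adj_local_max (nbr_leaf u gzu) xloc dx.
have guz : g u z by rewrite gsym.
by move: xz; rewrite -(deg1_nbr (nbr_leaf _ gzu) guz gux) eqxx.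
Qed.

End Saturated.

Section Handshake.
Variables (T : finType) (g : rel T).
Hypotheses (gsym : symmetric g) (girr : irreflexive g).

Lemma eq_set2 (a b x y : T) : a != b -> x != y ->
  ([set a; b] == [set x; y]) = ((a == x) && (b == y)) || ((a == y) && (b == x)).
Proof.
move=> ab xy; apply/idP/idP => [/eqP e | /orP[] /andP[/eqP-> /eqP->] //]; last by rewrite setUC.
move: ab; have : a \in [set x; y] by rewrite -e !inE eqxx.
have : b \in [set x; y] by rewrite -e !inE eqxx orbT.
by rewrite !inE => /orP[] /eqP-> /orP[] /eqP->; rewrite ?eqxx ?orbT.
Qed.

Lemma handshake : \sum_(x : T) deg g x = 2 * nedges g.
Proof.
have arcs : \sum_(x : T) deg g x = \sum_(p : T * T | g p.1 p.2) 1.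
  rewrite -(pair_big_dep xpredT (fun x y => g x y) (fun _ _ => 1)) /=.
  by apply: eq_bigr => x _; rewrite /deg -sum1dep_card.
pose E := [set p : {set T} | [exists x, exists y, (x != y) && g x y && (p == [set x; y])]].
have -> : nedges g = #|E| by [].
rewrite arcs (partition_big (fun p : T * T => [set p.1; p.2]) (fun e => e \in E)); last first.
  move=> [x y] /= gxy; rewrite inE; apply/existsP; exists x; apply/existsP; exists y.
  by rewrite gxy eqxx !andbT; apply: contraTneq gxy => ->; rewrite girr.
rewrite mulnC -sum_nat_const; apply: eq_bigr => e.
rewrite inE => /existsP[x /existsP[y /andP[/andP[xy gxy] /eqP ->]]].
rewrite sum1dep_card.
have -> : [set p : T * T | g p.1 p.2 & [set p.1; p.2] == [set x; y]] = [set (x, y); (y, x)].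
  apply/setP=> -[a b]; rewrite !inE /= !xpair_eqE.
  case: (boolP (g a b)) => gab /=.
    by rewrite eq_set2 //; apply: contraTneq gab => ->; rewrite girr.
  apply/esym/negP=> /orP[] /andP[/eqP ea /eqP eb]; move: gab; rewrite ea eb ?gxy //.
  by rewrite gsym gxy.
by rewrite cards2 xpair_eqE negb_and xy.
Qed.

Lemma card_le_nedges z y : (forall x, 0 < deg g x) -> (forall u, deg g u = 1 -> g u z) ->
  g z y -> deg g y != 1 -> #|T| <= nedges g.
Proof.
move=> deg_pos leaf_adj gzy dy; pose leaf := [set x | deg g x == 1].
have few_leaves : #|leaf| < deg g z.
  have sub : leaf \subset [set w | g z w] :\ y.
    apply/subsetP=> x; rewrite !inE => /eqP dx; rewrite gsym leaf_adj // andbT.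
    by apply: contraTneq dy => <-; rewrite dx.
  by move: (subset_leq_card sub) (cardsD1 y [set w | g z w]); rewrite inE gzy /deg; lia.
have nleaf : \sum_(x : T) (x \in leaf : nat) = #|leaf|.
  by rewrite -sum1_card [RHS]big_mkcond; apply: eq_bigr => x _; case: (x \in leaf).
have lower : deg g z + #|T|.-1 * 2 <= \sum_(x : T) (deg g x + (x \in leaf)).
  rewrite (bigD1 z) //= -(cardC1 z) -sum_nat_const; apply: leq_add; first exact: leq_addr.
  apply: leq_sum => x _; move: (deg_pos x); rewrite /leaf inE.
  by case: eqP => [-> | ne] //= d0; rewrite addn0; lia.
have T0 : 0 < #|T| by apply/card_gt0P; exists z.
by move: lower; rewrite big_split /= handshake nleaf; lia.
Qed.

End Handshake.

Theorem theorem2p4 (n k : nat) :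
  3 <= n -> 4 <= k ->
  forall g : rel 'I_n, simple_graph g -> k_saturated g k -> n <= nedges g.
Proof.
move=> n3 k4 g [gsym girr] [mp_lt sat].
have cardT : 2 < #|'I_n| by rewrite card_ord.
have [x1 dx1] : exists x, 1 < deg g x by apply: (saturated_deg_gt1 (k := k)).
have [z _ zmax] := @arg_maxnP _ x1 xpredT (deg g) isT.
have dz : 1 < deg g z := leq_trans dx1 (zmax x1 isT).
have zloc : deg_local_max g z by move=> y _; apply: zmax.
have [y gzy dy] : exists2 y, g z y & deg g y != 1.
  by apply: (max_deg_nonleaf_nbr (k := k)) => // x; apply: zmax.
rewrite -[X in X <= _]card_ord; apply: (card_le_nedges gsym girr _ _ gzy dy) => [x | u du].
  by apply: (no_isolated_vertex gsym mp_lt sat k4 x zloc); lia.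
exact: (leaf_adj_local_max (k := k)).
Qed.
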